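(* Let $v\ge 0$. The optimal value of $$\min_{y\in\mathbb{R}^{n^+}}\ \sum_{j=1}^{n^+} y_j^{1/\alpha}\quad\text{s.t.}\quad 0\le y_1\le\cdots\le y_{n^+},\qquad \sum_{j=1}^{n^+} h^+_j y_j=v$$ equals $$v^{1/\alpha}\cdot\frac{J}{\left[\left(\sum_{j=1}^{J}h^+_j\right)^{\frac{1}{1-\alpha}}+\sum_{j=J+1}^{n^+}\left(J^{\alpha}h^+_j\right)^{\frac{1}{1-\alpha}}\right]^{\frac{1-\alpha}{\alpha}}},$$ where $J$ is the transitional index.
   Context: Fix $N\in\mathbb{N}$, $\alpha\in(0,1)$ and an integer $1\le n^+\le N$. A function $f:[0,1]\to\mathbb{R}$ is inverse S-shaped if it is strictly increasing, continuously differentiable, and there is $x_0\in[0,1]$ such that $f'$ is strictly decreasing on $[0,x_0]$ and strictly increasing on $[x_0,1]$. Let $W^+:[0,1]\to[0,1]$ be inverse S-shaped with $W^+(0)=0$, $W^+(1)=1$. Decision weights: $h^+_j:=W^+\!\left(\frac{n^+-j+1}{N}\right)-W^+\!\left(\frac{n^+-j}{N}\right)$ for $j=1,\dots,n^+$. The transitional index is $J:=\min\{j\in\{1,\dots,n^+\}: j\,h^+_{j+1}\ge \sum_{j'=1}^{j}h^+_{j'}\}$, with the convention $h^+_{n^++1}=\infty$. *)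

From HB Require Import structures.
From mathcomp Require Import all_boot all_order all_algebra.
From mathcomp Require Import all_classical all_reals all_analysis.
Set Implicit Arguments. Unset Strict Implicit. Unset Printing Implicit Defensive.
Import Order.TTheory GRing.Theory Num.Theory.
Import numFieldNormedType.Exports.
Local Open Scope classical_set_scope.
Local Open Scope ring_scope.

Section Defs.
Variable R : realType.

Definition inverse_S_shaped (f : R -> R) : Prop :=
  (forall x y, 0 <= x -> x < y -> y <= 1 -> f x < f y) /\
  (forall x, 0 <= x <= 1 -> derivable f x 1) /\
  {within [set x : R | 0 <= x <= 1], continuous (derive1 f)} /\
  (exists x0, 0 <= x0 <= 1 /\
     (forall x y, 0 <= x -> x < y -> y <= x0 -> (derive1 f) y < (derive1 f) x) /\
     (forall x y, x0 <= x -> x < y -> y <= 1 -> (derive1 f) x < (derive1 f) y)).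

(* decision weights h^+_j, meaningful for 1 <= j <= nplus *)
Definition hplus (W : R -> R) (N nplus j : nat) : R :=
  W ((nplus - j + 1)%:R / N%:R) - W ((nplus - j)%:R / N%:R).

(* the condition defining the transitional index, with h^+_{n^+ + 1} = +oo *)
Definition trans_cond (W : R -> R) (N nplus j : nat) : bool :=
  (j == nplus) ||
  (\sum_(1 <= i < j.+1) hplus W N nplus i <= j%:R * hplus W N nplus j.+1).

Definition trans_index (W : R -> R) (N nplus : nat) : nat :=
  (find (trans_cond W N nplus) (iota 1 nplus)).+1.

Definition feasible (W : R -> R) (N nplus : nat) (v : R) (y : nat -> R) : Prop :=
  0 <= y 1%N /\
  (forall j, (1 <= j)%N -> (j < nplus)%N -> y j <= y j.+1) /\
  \sum_(1 <= j < nplus.+1) hplus W N nplus j * y j = v.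

Definition objective (alpha : R) (nplus : nat) (y : nat -> R) : R :=
  \sum_(1 <= j < nplus.+1) (y j) `^ (alpha^-1).

End Defs.

From HB Require Import structures.
From mathcomp Require Import all_boot all_order all_algebra.
From mathcomp Require Import all_classical all_reals all_analysis.
From mathcomp Require Import zify.
From mathcomp.algebra_tactics Require Import ring lra.
Set Implicit Arguments.
Unset Strict Implicit.
Import Order.TTheory GRing.Theory Num.Theory.
Import numFieldNormedType.Exports.
Local Open Scope classical_set_scope.
Local Open Scope ring_scope.

(* By the mean value theorem, the increments of W over the grid k/N are values
   of W' at increasing points; since W' first decreases and then increases, the
   decision weights h_j have no interior peak.  Minimality of the transitional
   index J makes the prefix averages of h_1, ..., h_J nonincreasing and forces
   h to be nondecreasing from J on.  With a the average of h_1, ..., h_J, put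
   t_j := 1 for j <= J and t_j := h_j / a for j > J; t is nondecreasing, and a
   Chebyshev-type sum inequality gives v <= a * sum_j t_j y_j for every feasible
   y, with equality for y*_j proportional to t_j^(alpha/(1-alpha)).  The gradient
   of sum_j y_j^(1/alpha) at y* is proportional to t, so by convexity y* is
   optimal, and its objective value is the stated formula. *)

Section InverseSShaped.
Variable R : realType.
Implicit Types (W : R -> R) (a b s d : R).

Lemma derivable_MVT {f : R -> R} {a b} : a < b ->
  {in `[a, b], forall x, derivable f x 1} ->
  exists2 c, a < c < b & f b - f a = derive1 f c * (b - a).
Proof.
move=> ab df.
have cf : {within `[a, b], continuous f} by exact: derivable_within_continuous.
have df' x : x \in `]a, b[ -> is_derive x 1 f (derive1 f x).
  by move=> xab; rewrite derive1E; exact/derivableP/df/subset_itv_oo_cc.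
have [c cab ->] := MVT ab df' cf.
by exists c; rewrite ?(itvP cab).
Qed.

Lemma inverse_S_shaped_derive1_lt_next W e1 e2 e3 : inverse_S_shaped W ->
  0 <= e1 -> e1 < e2 -> e2 < e3 -> e3 <= 1 ->
  derive1 W e1 < derive1 W e2 -> derive1 W e2 < derive1 W e3.
Proof.
move=> [_ [_ [_ [x0 [_ [dec inc]]]]]] e10 e12 e23 e31 lt12.
have x0e2 : x0 < e2.
  rewrite ltNge; apply/negP => e2x0.
  by have := dec _ _ e10 e12 e2x0; rewrite ltNge (ltW lt12).
by apply: inc => //; exact: ltW.
Qed.

Lemma inverse_S_shaped_increment_lt_next W s d : inverse_S_shaped W ->
  0 <= s -> 0 < d -> s + 3%:R * d <= 1 ->
  W (s + d) - W s < W (s + 2%:R * d) - W (s + d) ->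
  W (s + 2%:R * d) - W (s + d) < W (s + 3%:R * d) - W (s + 2%:R * d).
Proof.
move=> WS s0 d0 s3d1.
have [_ [dW _]] := WS.
have MVT_step x : 0 <= x -> x + d <= 1 ->
    exists2 e, x < e < x + d & W (x + d) - W x = derive1 W e * d.
  move=> x0 xd1; have xxd : x < x + d by rewrite ltrDl.
  have dW' : {in `[x, x + d], forall y, derivable W y 1}.
    move=> y /[!in_itv] /andP[xy yd]; apply: dW.
    by rewrite (le_trans x0 xy) (le_trans yd xd1).
  have [e xe ->] := derivable_MVT xxd dW'.
  by exists e => //; rewrite addrAC subrr add0r.
have [e1 /andP[e1l e1r] ->] := MVT_step s s0 ltac:(lra).
have [e2 /andP[e2l e2r]] := MVT_step (s + d) ltac:(lra) ltac:(lra).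
have [e3 /andP[e3l e3r]] := MVT_step (s + 2%:R * d) ltac:(lra) ltac:(lra).
have -> : s + d + d = s + 2%:R * d by lra.
have -> : s + 2%:R * d + d = s + 3%:R * d by lra.
move=> -> ->; rewrite !ltr_pM2r //.
apply: inverse_S_shaped_derive1_lt_next => //; lra.
Qed.

End InverseSShaped.

Definition peakless {R : realDomainType} (u : nat -> R) (n : nat) : Prop :=
  forall k, (1 <= k)%N -> (k.+2 <= n)%N -> u k.+2 < u k.+1 -> u k.+1 < u k.

Section Peakless.
Variable R : realDomainType.

Variables (u : nat -> R) (n : nat).
Hypothesis u_peakless : peakless u n.

Lemma peakless_lt_prefix j : (j < n)%N -> u j.+1 < u j ->
  forall i, (1 <= i <= j)%N -> u j.+1 < u i.
Proof.
elim: j => [|j IH] jn uj i /andP[i1 ij]; first by lia.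
have [-> //|ij'] := eqVneq i j.+1.
have j1 : (1 <= j)%N by lia.
have ij1 : (0 < i <= j)%N by lia.
exact: lt_trans uj (IH (ltnW jn) (u_peakless j1 jn uj) i ij1).
Qed.

Lemma peakless_le_from m : (1 <= m)%N -> u m <= u m.+1 ->
  forall i j, (m <= i <= j)%N -> (j <= n)%N -> u i <= u j.
Proof.
move=> m1 um.
have step k : (m <= k < n)%N -> u k <= u k.+1.
  elim: k => [|k IHk] /andP[mk kn]; first by lia.
  have [<- //|mk'] := eqVneq m k.+1.
  rewrite leNgt; apply/negP => /(u_peakless _ _); rewrite ltNge IHk //; lia.
move=> i; elim=> [|j IH] /andP[mi ij] jn; first by lia.
have [-> //|ij'] := eqVneq i j.+1.
by apply: le_trans (IH _ _) (step _ _); lia.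
Qed.

End Peakless.

Section DecisionWeights.
Variable R : realType.
Variables (N n : nat) (W : R -> R).
Hypotheses (N_gt0 : (0 < N)%N) (nN : (n <= N)%N) (W_S : inverse_S_shaped W).
Local Notation h := (hplus W N n).

Let N_gt0R : (0 : R) < N%:R. Proof. by rewrite ltr0n. Qed.

Lemma hplus_gt0 j : (1 <= j <= n)%N -> 0 < h j.
Proof.
move=> /andP[j1 jn]; rewrite /hplus subr_gt0; apply: W_S.1.
- by rewrite divr_ge0.
- by rewrite ltr_pM2r ?invr_gt0 // ltr_nat addn1.
- by rewrite ler_pdivrMr // mul1r ler_nat; lia.
Qed.

Lemma hplus_peakless : peakless h n.
Proof.
move=> k k1 kn; set m := (n - k.+2)%N; pose d : R := 1 / N%:R.
have grid i : ((m + i)%:R / N%:R : R) = m%:R / N%:R + i%:R * d.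
  by rewrite /d natrD mulrDl mul1r mulrC mulr_natl.
rewrite /hplus.
have -> : (n - k.+2 + 1 = m + 1)%N by [].
have -> : (n - k.+1 + 1 = m + 2)%N by rewrite /m; lia.
have -> : (n - k.+1 = m + 1)%N by rewrite /m; lia.
have -> : (n - k + 1 = m + 3)%N by rewrite /m; lia.
have -> : (n - k = m + 2)%N by rewrite /m; lia.
rewrite !grid mul1r.
apply: inverse_S_shaped_increment_lt_next => //.
- by rewrite divr_gt0.
- by rewrite -grid ler_pdivrMr // mul1r ler_nat /m; lia.
Qed.

End DecisionWeights.

Section TransitionalIndex.
Variable R : realType.
Variables (N n : nat) (W : R -> R).
Hypothesis n_gt0 : (0 < n)%N.
Local Notation h := (hplus W N n).
Local Notation J := (trans_index W N n).

Lemma trans_indexP : [/\ (1 <= J <= n)%N, trans_cond W N n J &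
  forall k, (1 <= k < J)%N -> k%:R * h k.+1 < \sum_(1 <= i < k.+1) h i].
Proof.
rewrite /trans_index; set P := trans_cond W N n.
have hasP : has P (iota 1 n).
  by apply/hasP; exists n; rewrite ?mem_iota /P /trans_cond ?eqxx //; lia.
have := hasP; rewrite has_find size_iota => fn.
split; first by lia.
  by have := nth_find 0 hasP; rewrite nth_iota.
move=> k /andP[k1 kJ]; have kf : (k.-1 < find P (iota 1 n))%N by lia.
have := before_find 0 kf; rewrite nth_iota; last by lia.
rewrite add1n prednK // /P /trans_cond => /negbT; rewrite negb_or => /andP[_].
by rewrite -ltNge.
Qed.

Hypotheses (nN : (n <= N)%N) (W_S : inverse_S_shaped W).

Let h_peakless : peakless h n := hplus_peakless (leq_trans n_gt0 nN) nN W_S.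

Lemma hplus_nondecr_from_trans_index i j : (J <= i <= j)%N -> (j <= n)%N ->
  h i <= h j.
Proof.
have [/andP[J1 Jn] J_cond _] := trans_indexP.
have [->|J_lt_n] := eqVneq J n; first by move=> ijn jn; have -> : i = j by lia.
apply: (peakless_le_from h_peakless J1).
rewrite leNgt; apply/negP => hJ_lt.
move: J_cond; rewrite /trans_cond (negbTE J_lt_n) /=; apply/negP.
rewrite -ltNge (_ : J%:R * _ = \sum_(1 <= k < J.+1) h J.+1); last first.
  by rewrite sumr_const_nat subn1 mulr_natl.
apply: ltr_sum_nat => // k /andP[k1 kJ].
by apply: (peakless_lt_prefix h_peakless _ hJ_lt); lia.
Qed.

End TransitionalIndex.

Section PrefixAverages.
Variable R : realFieldType.
Variables (h : nat -> R) (J : nat).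
Local Notation S k := (\sum_(1 <= i < k.+1) h i).

Lemma prefix_avg_le :
    (forall k, (1 <= k < J)%N -> k%:R * h k.+1 <= S k) ->
  forall k m, (k <= m <= J)%N -> k%:R * S m <= m%:R * S k.
Proof.
move=> hJ k; elim=> [|m IH] /andP[km mJ].
  by move: km; rewrite leqn0 => /eqP ->.
have [-> //|km'] := eqVneq k m.+1.
have [-> |k_gt0] := posnP k.
  by rewrite [X in _ <= _ * X]big_geq // mulr0n mulr0 mul0r.
have {}IH : k%:R * S m <= m%:R * S k by apply: IH; lia.
have hm : m%:R * h m.+1 <= S m by apply: hJ; lia.
have m_gt0 : (0 : R) < m%:R by rewrite ltr0n; lia.
have k_hm : k%:R * (m%:R * h m.+1) <= k%:R * S m by rewrite ler_wpM2l.
have IH1 : (m%:R + 1) * (k%:R * S m) <= (m%:R + 1) * (m%:R * S k).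
  by rewrite ler_wpM2l // addr_ge0.
rewrite -(ler_pM2l m_gt0) big_nat_recr //= -natr1.
nra.
Qed.

Lemma sum_mul_le_avg (y : nat -> R) : (0 < J)%N ->
    (forall k, (k <= J)%N -> k%:R * S J <= J%:R * S k) ->
    (forall j, (1 <= j < J)%N -> y j <= y j.+1) ->
  \sum_(1 <= j < J.+1) h j * y j <= S J / J%:R * \sum_(1 <= j < J.+1) y j.
Proof.
move=> J_gt0 avgJ y_nd; set a := S J / J%:R.
have J0 : (0 : R) < J%:R by rewrite ltr0n.
have abel m : (m <= J)%N ->
    \sum_(1 <= j < m.+1) (h j - a) * y j <= (S m - m%:R * a) * y m.
  elim: m => [|m IH] mJ; first by rewrite !big_geq // mul0r subrr mul0r.
  have Sm_ge : 0 <= S m - m%:R * a.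
    rewrite subr_ge0 /a mulrA ler_pdivrMr // [S m * _]mulrC.
    exact/avgJ/ltnW.
  have [-> |m_gt0] := posnP m.
    by rewrite big_nat1 big_nat1 mul1r.
  have y_m : y m <= y m.+1 by apply: y_nd; lia.
  have := ler_wpM2l Sm_ge y_m; have := IH (ltnW mJ).
  rewrite [X in _ -> _ -> X <= _]big_nat_recr //= [S m.+1]big_nat_recr //= -natr1.
  lra.
have aJ : S J - J%:R * a = 0 by rewrite /a mulrC divfK ?subrr // gt_eqF.
rewrite -subr_le0 mulr_sumr -sumrB.
under eq_bigr do rewrite -mulrBl.
by have := abel J (leqnn J); rewrite aJ mul0r.
Qed.

End PrefixAverages.

Section PowerConvexity.
Variable R : realType.

Lemma powR_ge_tangent (p x z : R) : 1 < p -> 0 <= x -> 0 <= z ->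
  z `^ p + p * z `^ (p - 1) * (x - z) <= x `^ p.
Proof.
move=> p1 x0 z0.
have p0 : 0 < p by lra.
have q0 : 0 < p / (p - 1) by rewrite divr_gt0 //; lra.
have pq : p^-1 + (p / (p - 1))^-1 = 1 by rewrite invf_div; field; lra.
(* Young's inequality for x and z^(p-1) with conjugate exponents p and p/(p-1) *)
have := conjugate_powR x0 (powR_ge0 z (p - 1)) p0 q0 pq.
rewrite -powRrM (_ : (p - 1) * (p / (p - 1)) = p); last by field; lra.
rewrite -(mulr_powRB1 z0 p0) invf_div.
set zp := z `^ (p - 1); set xp := x `^ p => young.
have : p * (x * zp) <= xp + (p - 1) * (z * zp).
  by have := ler_wpM2l (ltW p0) young; congr (_ <= _); field; lra.
lra.
Qed.

Lemma sum_powR_le_of_tangent (I : eqType) (r : seq I) (p c : R) (t y : I -> R) :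
    1 < p -> 0 <= c -> {in r, forall i, 0 <= t i} -> {in r, forall i, 0 <= y i} ->
  let z i := c * t i `^ (p - 1)^-1 in
  \sum_(i <- r) t i * z i <= \sum_(i <- r) t i * y i ->
  \sum_(i <- r) z i `^ p <= \sum_(i <- r) y i `^ p.
Proof.
move=> p1 c0 t0 y0 z tz_le.
have p0 : 0 < p by lra.
have gradient i : i \in r -> z i `^ (p - 1) = c `^ (p - 1) * t i.
  move=> ir; rewrite /z powRM ?powR_ge0 // -powRrM mulVf ?powRr1 ?t0 //.
  by rewrite subr_eq0 gt_eqF.
pose tangent i := z i `^ p + p * z i `^ (p - 1) * (y i - z i).
apply: le_trans (_ : \sum_(i <- r) tangent i <= _).
  rewrite /tangent big_split lerDl /=.
  pose gap i := p * c `^ (p - 1) * (t i * y i - t i * z i).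
  rewrite (eq_big_seq gap); last first.
    by move=> i ir; rewrite /gap gradient //; ring.
  by rewrite /gap -mulr_sumr sumrB mulr_ge0 ?subr_ge0 // mulr_ge0 ?powR_ge0 // ltW.
rewrite big_seq_cond [leRHS]big_seq_cond; apply: ler_sum => i /andP[ir _].
by apply: powR_ge_tangent => //; [exact: y0 | rewrite /z mulr_ge0 ?powR_ge0].
Qed.

End PowerConvexity.

Lemma feasible_ge0 (R : realType) (W : R -> R) N n v y :
  feasible W N n v y -> forall j, (1 <= j <= n)%N -> 0 <= y j.
Proof.
move=> [y1_ge0 [y_nd _]]; elim=> [//|j IH] /andP[_ jn].
have [-> //|j_gt0] := posnP j.
by apply: le_trans (IH _) (y_nd _ _ _); lia.
Qed.

Section Optimum.
Variable R : realType.
Variables (N n : nat) (alpha : R) (W : R -> R) (v : R).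
Hypotheses (n_gt0 : (0 < n)%N) (nN : (n <= N)%N) (alpha01 : 0 < alpha < 1)
  (W_S : inverse_S_shaped W) (v_ge0 : 0 <= v).
Local Notation h := (hplus W N n).
Local Notation S k := (\sum_(1 <= i < k.+1) h i).
Local Notation J := (trans_index W N n).

Let p := alpha^-1.
Let q := (1 - alpha)^-1.
Definition avg_weight : R := S J / J%:R.
Local Notation a := avg_weight.

Definition opt_weight (j : nat) : R := if (j <= J)%N then 1 else h j / a.
Local Notation t := opt_weight.

Let Q := \sum_(1 <= j < n.+1) t j `^ q.
Let c := v / (a * Q).

Definition opt_solution (j : nat) : R := c * t j `^ (p - 1)^-1.

Let N_gt0 : (0 < N)%N. Proof. exact: leq_trans n_gt0 nN. Qed.
Let J_spec := trans_indexP N W n_gt0.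
Let J_gt0 : (0 < J)%N. Proof. by case: J_spec => /andP[]. Qed.
Let J_le_n : (J <= n)%N. Proof. by case: J_spec => /andP[]. Qed.
Let J_gt0R : (0 : R) < J%:R. Proof. by rewrite ltr0n. Qed.
Let p_gt1 : 1 < p. Proof. by rewrite /p invf_gt1 //; case/andP: alpha01. Qed.

Let sum_splitJ (F : nat -> R) : \sum_(1 <= j < n.+1) F j =
  \sum_(1 <= j < J.+1) F j + \sum_(J.+1 <= j < n.+1) F j.
Proof. by rewrite -big_cat_nat. Qed.

Let exp_conj : (p - 1)^-1 = q - 1.
Proof.
have [alpha0 alpha1] := andP alpha01.
by rewrite /p /q; field; rewrite ?subr_eq0 ?gt_eqF ?lt_eqF.
Qed.

Let q_gt1 : 1 < q.
Proof. by rewrite /q invf_gt1; case/andP: alpha01 => *; lra. Qed.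

Let SJ_gt0 : 0 < S J.
Proof.
have h1 : 0 < h 1 by rewrite hplus_gt0 // n_gt0.
have : 0 <= \sum_(2 <= i < J.+1) h i.
  rewrite big_nat_cond sumr_ge0 // => i /andP[/andP[i2 iJ] _].
  by rewrite ltW // hplus_gt0 // (ltnW i2) (leq_trans (ltnSE iJ) J_le_n).
move=> rest; rewrite big_ltn //; lra.
Qed.

Let a_gt0 : 0 < a. Proof. by rewrite divr_gt0. Qed.

Let SJ_eq : S J = a * J%:R. Proof. by rewrite /avg_weight divfK // gt_eqF. Qed.

Let avg_le_hplus j : (J < j <= n)%N -> a <= h j.
Proof.
move=> /andP[Jj jn]; have [_ J_cond _] := J_spec.
move: J_cond; rewrite /trans_cond ltn_eqF ?(leq_trans Jj jn) //=.
rewrite /avg_weight ler_pdivrMr // mulrC => /le_trans; apply.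
by rewrite ler_pM2r // (hplus_nondecr_from_trans_index n_gt0 nN W_S) ?leqnSn.
Qed.

Let t_le j : (j <= J)%N -> t j = 1. Proof. by rewrite /opt_weight => ->. Qed.

Let hplus_eq j : (J < j)%N -> h j = a * t j.
Proof. by move=> Jj; rewrite /opt_weight leqNgt Jj /= mulrC divfK // gt_eqF. Qed.

Let t_ge1 j : (j <= n)%N -> 1 <= t j.
Proof.
move=> jn; rewrite /opt_weight; case: leqP => // Jj.
by rewrite ler_pdivlMr // mul1r avg_le_hplus ?Jj.
Qed.

Let t_ge0 j : (j <= n)%N -> 0 <= t j.
Proof. by move=> jn; apply: le_trans (t_ge1 jn). Qed.

Lemma opt_weight_nondecr j : (1 <= j < n)%N -> t j <= t j.+1.
Proof.
move=> /andP[j1 jn]; case: (leqP j J) => [jJ|Jj].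
  by rewrite t_le // t_ge1.
rewrite /opt_weight leqNgt Jj ltnNge ltnW //= ler_pM2r ?invr_gt0 //.
by rewrite (hplus_nondecr_from_trans_index n_gt0 nN W_S) // (ltnW Jj) leqnSn.
Qed.

Let t_pow_le j : (j <= J)%N -> t j `^ q = 1.
Proof. by move=> jJ; rewrite t_le // powR1. Qed.

Let Q_eq : Q = J%:R + \sum_(J.+1 <= j < n.+1) t j `^ q.
Proof.
rewrite /Q sum_splitJ (eq_big_nat _ _ (F2 := fun=> 1)); last first.
  by move=> j /andP[_ jJ]; rewrite t_pow_le.
by rewrite sumr_const_nat subn1.
Qed.

Let Q_gt0 : 0 < Q.
Proof.
rewrite Q_eq ltr_wpDr // big_nat_cond sumr_ge0 // => j _; exact: powR_ge0.
Qed.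

Let c_ge0 : 0 <= c.
Proof. by rewrite divr_ge0 // ltW // mulr_gt0. Qed.

Let t_mul_pow j : (j <= n)%N -> t j * t j `^ (q - 1) = t j `^ q.
Proof. by move=> jn; rewrite mulr_powRB1 ?t_ge0 // (lt_trans ltr01 q_gt1). Qed.

Lemma sum_hplus_mul_le (y : nat -> R) :
    (forall j, (1 <= j < n)%N -> y j <= y j.+1) ->
  \sum_(1 <= j < n.+1) h j * y j <= a * \sum_(1 <= j < n.+1) t j * y j.
Proof.
move=> y_nd; rewrite !sum_splitJ mulrDr; apply: lerD.
  rewrite [X in _ <= _ * X](eq_big_nat _ _ (F2 := y)); last first.
    by move=> j /andP[_ jJ]; rewrite t_le ?mul1r.
  have J_min : forall k, (1 <= k < J)%N -> k%:R * h k.+1 <= S k.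
    by case: J_spec => _ _ J_min k kJ; exact/ltW/J_min.
  apply: sum_mul_le_avg => // [k kJ|j /andP[j1 jJ]].
  - by apply: (prefix_avg_le J_min); rewrite kJ leqnn.
  - by rewrite y_nd // j1 (leq_trans jJ J_le_n).
rewrite mulr_sumr le_eqVlt; apply/orP; left; apply/eqP.
by apply: eq_big_nat => j /andP[Jj _]; rewrite hplus_eq ?mulrA.
Qed.

Lemma sum_hplus_mul_opt_solution : \sum_(1 <= j < n.+1) h j * opt_solution j = v.
Proof.
have sum_pow : \sum_(1 <= j < n.+1) h j * t j `^ (q - 1) = a * Q.
  rewrite sum_splitJ Q_eq mulrDr -SJ_eq mulr_sumr; congr (_ + _).
    by apply: eq_big_nat => j /andP[_ jJ]; rewrite t_le ?powR1 ?mulr1.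
  by apply: eq_big_nat => j /andP[Jj jn]; rewrite hplus_eq // -mulrA t_mul_pow.
rewrite /opt_solution exp_conj; under eq_bigr do rewrite mulrCA.
by rewrite -mulr_sumr sum_pow /c divfK // gt_eqF // mulr_gt0.
Qed.

Lemma sum_opt_weight_mul_opt_solution :
  a * \sum_(1 <= j < n.+1) t j * opt_solution j = v.
Proof.
rewrite /opt_solution exp_conj.
under eq_big_nat => j /andP[_ jn] do rewrite mulrCA t_mul_pow //.
by rewrite -mulr_sumr /c mulrCA divfK // gt_eqF // mulr_gt0.
Qed.

Lemma opt_solution_feasible : feasible W N n v opt_solution.
Proof.
split; first by rewrite mulr_ge0 ?powR_ge0.
split; last exact: sum_hplus_mul_opt_solution.
move=> j j1 jn; apply: ler_wpM2l => //.
apply: ge0_ler_powR; rewrite ?nnegrE.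
- by rewrite exp_conj subr_ge0 ltW.
- exact: t_ge0 (ltnW jn).
- exact: t_ge0 jn.
- by rewrite opt_weight_nondecr ?j1.
Qed.

Let objective_opt_solution_eq : objective alpha n opt_solution = c `^ p * Q.
Proof.
have exp_q : (p - 1)^-1 * p = q.
  have [alpha0 alpha1] := andP alpha01.
  by rewrite exp_conj /p /q; field; rewrite ?subr_eq0 ?gt_eqF ?lt_eqF.
rewrite /objective /Q mulr_sumr; apply: eq_bigr => j _.
by rewrite /opt_solution powRM ?c_ge0 ?powR_ge0 // -powRrM exp_q.
Qed.

Lemma objective_opt_solution_le y : feasible W N n v y ->
  objective alpha n opt_solution <= objective alpha n y.
Proof.
move=> y_feas; have [_ [y_nd y_sum]] := y_feas.
apply: (@sum_powR_le_of_tangent _ _ _ p c t y p_gt1 c_ge0).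
- by move=> j; rewrite mem_index_iota => /andP[_ jn]; apply: t_ge0.
- by move=> j; rewrite mem_index_iota ltnS => jn; have := feasible_ge0 y_feas jn.
- rewrite -(ler_pM2l a_gt0) sum_opt_weight_mul_opt_solution -y_sum.
  by apply: sum_hplus_mul_le => j /andP[j1 jn]; apply: y_nd.
Qed.

Let value_eq :
  v `^ (alpha^-1) *
    (J%:R / (S J `^ q + \sum_(J.+1 <= j < n.+1) (J%:R `^ alpha * h j) `^ q)
      `^ ((1 - alpha) / alpha)) = c `^ p * Q.
Proof.
have [alpha0 alpha1] := andP alpha01.
set B := J%:R `^ alpha * a.
have B_gt0 : 0 < B by rewrite mulr_gt0 // powR_gt0.
have SJ_pow : S J `^ q = B `^ q * J%:R.
  have J_split : J%:R `^ alpha * J%:R `^ (1 - alpha) = J%:R.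
    rewrite -powRD; last by rewrite (gt_eqF J_gt0R) implybT.
    by rewrite addrC subrK powRr1 // ltW.
  have -> : S J = B * J%:R `^ (1 - alpha).
    by rewrite SJ_eq /B [RHS]mulrAC J_split mulrC.
  rewrite powRM ?powR_ge0 // ?ltW // -powRrM /q mulfV ?powRr1 //.
  by rewrite subr_eq0 gt_eqF.
have tail_pow : \sum_(J.+1 <= j < n.+1) (J%:R `^ alpha * h j) `^ q =
    B `^ q * \sum_(J.+1 <= j < n.+1) t j `^ q.
  rewrite mulr_sumr; apply: eq_big_nat => j /andP[Jj]; rewrite ltnS => jn.
  by rewrite hplus_eq // mulrA powRM ?(ltW B_gt0) ?t_ge0.
have exp_p : q * ((1 - alpha) / alpha) = p.
  by rewrite /q /p; field; rewrite ?subr_eq0 ?gt_eqF ?lt_eqF.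
have exp_p1 : (1 - alpha) / alpha = p - 1 by rewrite /p; field; rewrite gt_eqF.
have B_pow : B `^ p = J%:R * a `^ p.
  by rewrite powRM ?powR_ge0 ?ltW // -powRrM mulfV ?gt_eqF // powRr1.
have v_pow : v `^ p = c `^ p * (a `^ p * Q `^ p).
  have v_eq : v = c * (a * Q) by rewrite /c divfK // gt_eqF // mulr_gt0.
  have [a_ge0 Q_ge0] := (ltW a_gt0, ltW Q_gt0).
  by rewrite {1}v_eq (powRM _ c_ge0 (mulr_ge0 a_ge0 Q_ge0)) (powRM _ a_ge0 Q_ge0).
rewrite -/p SJ_pow tail_pow -mulrDr -Q_eq powRM ?powR_ge0 ?ltW //.
rewrite -powRrM exp_p exp_p1 B_pow v_pow.
rewrite -(mulr_powRB1 (ltW Q_gt0) (lt_trans ltr01 p_gt1)).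
by field; rewrite !gt_eqF ?powR_gt0.
Qed.

Lemma objective_opt_solution : objective alpha n opt_solution =
  v `^ (alpha^-1) *
    (J%:R / (S J `^ q + \sum_(J.+1 <= j < n.+1) (J%:R `^ alpha * h j) `^ q)
      `^ ((1 - alpha) / alpha)).
Proof. by rewrite value_eq objective_opt_solution_eq. Qed.

End Optimum.

Theorem corollary1 (R : realType) (N nplus : nat) (alpha : R) (W : R -> R) (v : R) :
  (1 <= nplus)%N -> (nplus <= N)%N ->
  0 < alpha < 1 ->
  inverse_S_shaped W -> W 0 = 0 -> W 1 = 1 ->
  0 <= v ->
  let J := trans_index W N nplus in
  let h := hplus W N nplus in
  let value :=
    v `^ (alpha^-1) *
    (J%:R /
      ((\sum_(1 <= j < J.+1) h j) `^ ((1 - alpha)^-1) +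
       \sum_(J.+1 <= j < nplus.+1) (J%:R `^ alpha * h j) `^ ((1 - alpha)^-1))
      `^ ((1 - alpha) / alpha)) in
  (exists y : nat -> R, feasible W N nplus v y /\ objective alpha nplus y = value) /\
  (forall y : nat -> R, feasible W N nplus v y -> value <= objective alpha nplus y).
Proof.
move=> n_gt0 nN alpha01 W_S _ _ v_ge0 J h value.
have opt_value := objective_opt_solution n_gt0 nN alpha01 W_S v_ge0.
split.
  exists (opt_solution N nplus alpha W v); split => //.
  exact: opt_solution_feasible n_gt0 nN alpha01 W_S v_ge0.
move=> y /(objective_opt_solution_le n_gt0 nN alpha01 W_S v_ge0).
by rewrite opt_value.
Qed.
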